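(* Let $G$ be a group acting linearly and isometrically on a real Hilbert space $M$, and $X$ a random variable with $\mathbb{E}(\|X\|^2)<+\infty$ and $t_0=\mathbb{E}(X)\neq0$. Assume there exist $a>0$ and a $C^1$ map $\varphi:(-a,a)\to M$ with values in $[t_0]$, $\varphi(0)=t_0$ and $\varphi'(0)=v\neq0$, and assume $\mathbb{P}(X\notin v^\perp)>0$. Then $\mathbb{P}\big(\sup_{g\in G}\langle g\cdot X,t_0\rangle>\langle X,t_0\rangle\big)>0$ and $[t_0]$ is not a Fréchet mean of $[X]$.
   Context: $M$ is a real Hilbert space with inner product $\langle\cdot,\cdot\rangle$ and norm $\|\cdot\|$; the action is linear and isometric ($\|g\cdot x\|=\|x\|$). $[m]=\{g\cdot m:g\in G\}$, $v^\perp=\{x:\langle x,v\rangle=0\}$. $F(m)=\mathbb{E}\big(\inf_{g}\|g\cdot X-m\|^2\big)$ and $[m_\star]$ is a Fréchet mean of $[X]$ if $m_\star$ globally minimises $F$. *)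

From HB Require Import structures.
From mathcomp Require Import all_boot all_order all_algebra.
From mathcomp Require Import all_classical all_reals all_analysis.
Set Implicit Arguments. Unset Strict Implicit. Unset Printing Implicit Defensive.
Import Order.TTheory GRing.Theory Num.Theory.
Import numFieldNormedType.Exports.
Local Open Scope classical_set_scope.
Local Open Scope ring_scope.

(* [ip] is an inner product on the real normed space [M] inducing its norm.
   Together with completeness of [M] this makes [M] a real Hilbert space. *)
Definition is_inner_product (R : realType) (M : normedModType R)
  (ip : M -> M -> R) : Prop :=
  [/\ (forall x y, ip x y = ip y x),
      (forall x y z, ip (x + y) z = ip x z + ip y z),
      (forall (a : R) x y, ip (a *: x) y = a * ip x y) &
      (forall x, ip x x = `|x| ^+ 2)].

Definition is_group (G : Type) (mul : G -> G -> G) (one : G) (inv : G -> G) : Prop :=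
  [/\ (forall a b c, mul a (mul b c) = mul (mul a b) c),
      (forall a, mul one a = a),
      (forall a, mul a one = a),
      (forall a, mul (inv a) a = one) &
      (forall a, mul a (inv a) = one)].

Definition is_lin_isom_action (R : realType) (M : normedModType R) (G : Type)
  (mul : G -> G -> G) (one : G) (act : G -> M -> M) : Prop :=
  [/\ (forall x, act one x = x),
      (forall g h x, act (mul g h) x = act g (act h x)),
      (forall g x y, act g (x + y) = act g x + act g y),
      (forall g (a : R) x, act g (a *: x) = a *: act g x) &
      (forall g x, `|act g x| = `|x|)].

Definition gorbit (R : realType) (M : normedModType R) (G : Type)
  (act : G -> M -> M) (m : M) : set M := [set act g m | g in [set: G]].

(* inf_g || g.x - m ||^2 (a set of nonnegative reals, so the inf is meaningful) *)
Definition orbit_dist2 (R : realType) (M : normedModType R) (G : Type)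
  (act : G -> M -> M) (x m : M) : R :=
  inf [set `|act g x - m| ^+ 2 | g in [set: G]].

Definition frechet_fun (R : realType) (M : normedModType R) (G : Type)
  (act : G -> M -> M) d (Omega : measurableType d) (P : probability Omega R)
  (X : Omega -> M) (m : M) : \bar R :=
  (\int[P]_w (orbit_dist2 act (X w) m)%:E)%E.

Definition is_frechet_mean (R : realType) (M : normedModType R) (G : Type)
  (act : G -> M -> M) d (Omega : measurableType d) (P : probability Omega R)
  (X : Omega -> M) (mstar : M) : Prop :=
  forall m, (frechet_fun act P X mstar <= frechet_fun act P X m)%E.

(* t0 = E(X), in the (weak/Pettis) sense: E <X, y> = <t0, y> for all y *)
Definition is_expectation (R : realType) (M : normedModType R) (ip : M -> M -> R)
  d (Omega : measurableType d) (P : probability Omega R) (X : Omega -> M) (t0 : M) : Prop :=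
  forall y, P.-integrable [set: Omega] (fun w => (ip (X w) y)%:E) /\
            (\int[P]_w (ip (X w) y)%:E = (ip t0 y)%:E)%E.

From HB Require Import structures.
From mathcomp Require Import all_boot all_order all_algebra.
From mathcomp Require Import all_classical all_reals all_analysis.
From mathcomp Require Import ring lra measurable_realfun.
Import Order.TTheory GRing.Theory Num.Theory.
Import numFieldNormedType.Exports.
Local Open Scope classical_set_scope.
Local Open Scope ring_scope.

(* Expanding the squared distance, [F (l t0) = E|X|^2 + l^2 |t0|^2 - 2 l E s(X)]
   for [l >= 0], where [s(x) = sup_g <g.x, t0>]. Since [t0 = E X] and
   [s(x) >= <x, t0>], we get [E s(X) >= |t0|^2], strictly as soon as
   [s(X) > <X, t0>] with positive probability. The curve [phi] lies in the orbit
   of [t0], and [<x, g.t0> = <g^-1.x, t0> <= s(x)], so [t |-> <x, phi t>] is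
   maximal at [t = 0] when [s(x) = <x, t0>]; by Fermat's rule this forces
   [<x, v> = 0]. Hence [E s(X) > |t0|^2] and the parabola [l |-> F (l t0)] is
   minimised at [l = E s(X) / |t0|^2 > 1] rather than at [l = 1]. *)

Lemma inf_affine_image (R : realType) (T : Type) (t : T) (f : T -> R) (c k : R) :
  0 <= k -> has_ubound [set f g | g in [set: T]] ->
  inf [set c - k * f g | g in [set: T]] = c - k * sup [set f g | g in [set: T]].
Proof.
move=> k0 [B fB].
have fS g : f g <= sup [set f g | g in [set: T]].
  by apply: ub_le_sup; [exists B | exists g].
have lbE : has_lbound [set c - k * f g | g in [set: T]].
  exists (c - k * B) => _ [g _ <-].
  by rewrite lerD2l lerN2 ler_wpM2l //; apply: fB; exists g.
have infE g : inf [set c - k * f g | g in [set: T]] <= c - k * f g.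
  by apply: (ge_inf lbE); exists g.
apply/le_anti/andP; split; last first.
  apply: lb_le_inf; first by exists (c - k * f t), t.
  by move=> _ [g _ <-]; rewrite lerD2l lerN2 ler_wpM2l ?fS.
have [k0E|kn0] := eqVneq k 0; first by have := infE t; rewrite k0E !mul0r.
have kp : 0 < k by rewrite lt_neqAle eq_sym kn0.
rewrite lerBrDl -lerBrDr -ler_pdivlMl //.
apply: ge_sup; first by exists (f t), t.
by move=> _ [g _ <-]; rewrite ler_pdivlMl // lerBrDr -lerBrDl.
Qed.

Lemma integral_gt0 d (T : measurableType d) (R : realType)
    (mu : {measure set T -> \bar R}) (f : T -> R) :
  measurable_fun [set: T] f -> (forall x, 0 <= f x) ->
  (0 < mu [set x | (0 < f x)%R])%E -> (0 < \int[mu]_x (f x)%:E)%E.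
Proof.
move=> mf f0 mupos.
have mpos : measurable [set x | 0 < f x].
  by rewrite -[X in measurable X]setTI -preimage_itvoy; exact: mf.
rewrite lt_neqAle integral_ge0 ?andbT; last by move=> x _; rewrite lee_fin.
apply/negP => /eqP int0.
have [N [mN muN0 fN]] : ae_eq mu setT (EFin \o f) (cst 0).
  apply/(ae_eq_integral_abs mu measurableT); first exact/measurable_EFinP.
  by rewrite int0; apply: eq_integral => x _ /=; rewrite ger0_norm.
have : (mu [set x | (0 < f x)%R] <= mu N)%E.
  apply: le_measure; rewrite ?inE // => x /= fx; apply: fN => /(_ I) /= /eqP.
  by rewrite eqe gt_eqF.
by rewrite muN0 leNgt mupos.
Qed.

Lemma integral_affine_EFin d (T : measurableType d) (R : realType)
    (P : probability T R) (f g : T -> R) (c k : R) :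
  P.-integrable [set: T] (EFin \o f) -> P.-integrable [set: T] (EFin \o g) ->
  (\int[P]_x (f x + c - k * g x)%:E =
   (\int[P]_x f x + c - k * \int[P]_x g x)%:E)%E.
Proof.
move=> intf intg.
have ic := finite_measure_integrable_cst P c (@measurableT _ T).
have ifc : P.-integrable [set: T] (EFin \o (fun x => f x + c)).
  exact: integrableD intf ic.
have ikg : P.-integrable [set: T] (EFin \o (fun x => k * g x)).
  exact: integrableZl intg.
have ifkg : P.-integrable [set: T] (EFin \o (fun x => f x + c - k * g x)).
  by apply: eq_integrable (integrableB measurableT ifc ikg) => // x _; rewrite /= EFinB.
rewrite -[LHS]fineK ?integrable_fin_num //; congr EFin.
rewrite -/(\int[P]_x (f x + c - k * g x)).
rewrite (@RintegralB _ _ _ P _ (fun x => f x + c) (fun x => k * g x)) //.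
rewrite RintegralD // RintegralZl // Rintegral_cst //.
have P1 : fine (P [set: T]) = 1 by rewrite probability_setT.
by rewrite P1 mulr1.
Qed.

Definition orbit_ip_sup {R : realType} {M : normedModType R} (ip : M -> M -> R)
    {G : Type} (act : G -> M -> M) (x y : M) : R :=
  sup [set ip (act g x) y | g in [set: G]].

Section InnerProduct.
Context {R : realType} {M : normedModType R} {ip : M -> M -> R}.
Hypothesis hip : is_inner_product ip.

Lemma ipC x y : ip x y = ip y x. Proof. by case: hip. Qed.
Lemma ipDl x y z : ip (x + y) z = ip x z + ip y z. Proof. by case: hip. Qed.
Lemma ipZl a x y : ip (a *: x) y = a * ip x y. Proof. by case: hip. Qed.
Lemma ipxx x : ip x x = `|x| ^+ 2. Proof. by case: hip. Qed.

Lemma ipDr x y z : ip x (y + z) = ip x y + ip x z.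
Proof. by rewrite ipC ipDl !(ipC x). Qed.

Lemma ipZr a x y : ip x (a *: y) = a * ip x y.
Proof. by rewrite ipC ipZl ipC. Qed.

Lemma ipNl x y : ip (- x) y = - ip x y.
Proof. by rewrite -scaleN1r ipZl mulN1r. Qed.

Lemma ipNr x y : ip x (- y) = - ip x y.
Proof. by rewrite ipC ipNl ipC. Qed.

Lemma ipBr x y z : ip x (y - z) = ip x y - ip x z.
Proof. by rewrite ipDr ipNr. Qed.

Lemma normrD_sqr x y : `|x + y| ^+ 2 = `|x| ^+ 2 + 2 * ip x y + `|y| ^+ 2.
Proof. rewrite -!ipxx ipDl !ipDr (ipC y x); ring. Qed.

Lemma normrB_sqr x y : `|x - y| ^+ 2 = `|x| ^+ 2 - 2 * ip x y + `|y| ^+ 2.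
Proof. by rewrite normrD_sqr normrN ipNr; ring. Qed.

Lemma ip_polar x y : ip x y = (`|x + y| ^+ 2 - `|x| ^+ 2 - `|y| ^+ 2) / 2.
Proof. rewrite normrD_sqr; lra. Qed.

Lemma ip_le_normM x y : ip x y <= `|x| * `|y|.
Proof.
have [->|x0] := eqVneq x 0.
  by rewrite normr0 mul0r -(scale0r (0 : M)) ipZl mul0r.
have [->|y0] := eqVneq y 0.
  by rewrite normr0 mulr0 -(scale0r (0 : M)) ipZr mul0r.
have xyp : 0 < `|x| * `|y| by rewrite mulr_gt0 ?normr_gt0.
have := sqr_ge0 `| `|y| *: x - `|x| *: y |.
rewrite normrB_sqr ipZl ipZr !normrZ !normr_id => h.
nra.
Qed.

Lemma normr_ip_le x y : `|ip x y| <= `|x| * `|y|.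
Proof.
rewrite ler_norml ip_le_normM andbT -[x]opprK ipNl lerN2 normrN.
exact: ip_le_normM.
Qed.

Lemma continuous_ip y : continuous (ip y).
Proof.
move=> x; apply/cvgrPdist_lt => e e0.
have ye : 0 < e / (`|y| + 1) by rewrite divr_gt0 // ltr_wpDl.
near=> z.
have xz : `|x - z| < e / (`|y| + 1).
  by near: z; exact: (@cvgrPdist_lt _ _ _ (nbhs x) _ id x).1 cvg_id _ ye.
rewrite -ipBr (le_lt_trans (normr_ip_le _ _)) //.
rewrite (le_lt_trans (ler_wpM2l _ (ltW xz))) // mulrCA gtr_pMr //.
by rewrite ltr_pdivrMr ?ltr_wpDl // mul1r ltrDl.
Unshelve. all: by end_near. Qed.

Lemma is_derive_ip y {f : R -> M} {t : R} : derivable f t 1 ->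
  is_derive t 1 (fun h => ip y (f h)) (ip y ('D_1 f t)).
Proof.
move=> df.
have qE : (fun h => h^-1 *: (ip y (f (h *: 1 + t)) - ip y (f t))) =
    ip y \o (fun h => h^-1 *: ((f \o shift t) (h *: 1) - f t)).
  by apply/funext => h /=; rewrite ipZr ipBr.
have cv : (fun h => h^-1 *: (ip y (f (h *: 1 + t)) - ip y (f t))) @ 0^'
    --> ip y ('D_1 f t).
  by rewrite qE; exact: continuous_cvg _ (continuous_ip y _) df.
by apply: DeriveDef; [exact: cvgP cv | exact: cvg_lim].
Qed.

Section OrbitInnerSup.
Context {G : Type} {mul : G -> G -> G} {one : G} {inv : G -> G} {act : G -> M -> M}.
Hypothesis hG : is_group mul one inv.
Hypothesis hact : is_lin_isom_action mul one act.

Lemma act_one x : act one x = x. Proof. by case: hact. Qed.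
Lemma act_mul g h x : act (mul g h) x = act g (act h x). Proof. by case: hact. Qed.
Lemma actD g x y : act g (x + y) = act g x + act g y. Proof. by case: hact. Qed.
Lemma normr_act g x : `|act g x| = `|x|. Proof. by case: hact. Qed.

Lemma ip_act g x y : ip (act g x) (act g y) = ip x y.
Proof. by rewrite !ip_polar -actD !normr_act. Qed.

Lemma ip_act_r g x y : ip x (act g y) = ip (act (inv g) x) y.
Proof.
rewrite -[RHS](ip_act g) -act_mul.
by have [_ _ _ _ ->] := hG; rewrite act_one.
Qed.

Local Notation orbit_ip_sup := (orbit_ip_sup ip act).

Lemma has_ubound_orbit_ip x y : has_ubound [set ip (act g x) y | g in [set: G]].
Proof.
by exists (`|x| * `|y|) => _ [g _ <-]; rewrite -(normr_act g x) ip_le_normM.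
Qed.

Lemma ip_act_le_orbit_ip_sup g x y : ip (act g x) y <= orbit_ip_sup x y.
Proof. by apply: ub_le_sup; [exact: has_ubound_orbit_ip | exists g]. Qed.

Lemma ip_le_orbit_ip_sup x y : ip x y <= orbit_ip_sup x y.
Proof. by rewrite -{1}(act_one x) ip_act_le_orbit_ip_sup. Qed.

Lemma orbit_ip_sup_le_normM x y : orbit_ip_sup x y <= `|x| * `|y|.
Proof.
apply: ge_sup; first by exists (ip (act one x) y), one.
by move=> _ [g _ <-]; rewrite -(normr_act g x) ip_le_normM.
Qed.

Lemma orbit_dist2_scale x y l : 0 <= l ->
  orbit_dist2 act x (l *: y) =
  `|x| ^+ 2 + l ^+ 2 * `|y| ^+ 2 - 2 * l * orbit_ip_sup x y.
Proof.
move=> l0; rewrite /orbit_dist2 (eq_imagel (f' := fun g =>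
  (`|x| ^+ 2 + l ^+ 2 * `|y| ^+ 2) - 2 * l * ip (act g x) y)); last first.
  move=> g _; rewrite normrB_sqr normr_act ipZr normrZ exprMn ger0_norm //.
  ring.
rewrite (@inf_affine_image _ _ one) ?mulr_ge0 //; exact: has_ubound_orbit_ip.
Qed.

Lemma ip_lt_orbit_ip_sup {phi : R -> M} {a : R} y : 0 < a ->
  (forall t, - a < t < a -> derivable phi t 1) ->
  (forall t, - a < t < a -> gorbit act (phi 0) (phi t)) ->
  ip y ('D_1 phi 0) != 0 -> ip y (phi 0) < orbit_ip_sup y (phi 0).
Proof.
move=> a0 dphi orb; apply: contraNlt => suple.
have itv t : t \in `](- a), a[ = (- a < t < a) by rewrite in_itv.
have max0 : forall t, t \in `](- a), a[ -> ip y (phi t) <= ip y (phi 0).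
  move=> t; rewrite itv => /orb [g _ <-].
  by rewrite ip_act_r (le_trans (ip_act_le_orbit_ip_sup _ _ _)).
have dip t : t \in `](- a), a[ -> derivable (fun h => ip y (phi h)) t 1.
  by rewrite itv => /dphi /(is_derive_ip y) [].
have a0itv : 0 \in `](- a), a[ by rewrite itv oppr_lt0 a0.
have d0 : derivable phi 0 1 by apply: dphi; rewrite -itv.
have [_ D0] := derive1_at_max (ltW (gt0_cp a0).2) dip a0itv max0.
by have [_ <-] := is_derive_ip y d0; rewrite D0.
Qed.

Lemma orbit_dist2_0 x : orbit_dist2 act x 0 = `|x| ^+ 2.
Proof. by rewrite -(scale0r x) orbit_dist2_scale //; ring. Qed.

Lemma orbit_ip_supE x y :
  orbit_ip_sup x y = (orbit_dist2 act x 0 + `|y| ^+ 2 - orbit_dist2 act x y) / 2.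
Proof. rewrite orbit_dist2_0 -{3}(scale1r y) orbit_dist2_scale //; lra. Qed.

Lemma normr_orbit_ip_sup_le x y : `|orbit_ip_sup x y| <= `|x| * `|y|.
Proof.
rewrite ler_norml orbit_ip_sup_le_normM andbT.
rewrite (le_trans _ (ip_le_orbit_ip_sup _ _)) //.
by rewrite lerNl -ipNl (le_trans (ip_le_normM _ _)) // normrN.
Qed.

Section FrechetFunctionOnRay.
Context {d : measure_display} {Omega : measurableType d} {P : probability Omega R}.
Variables (X : Omega -> M) (t0 : M).
Hypothesis mD :
  forall m, measurable_fun [set: Omega] (fun w => orbit_dist2 act (X w) m).
Hypothesis mX : forall y, measurable_fun [set: Omega] (fun w => ip (X w) y).
Hypothesis EX2 : (\int[P]_w (`|X w| ^+ 2)%:E < +oo)%E.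

Lemma integrable_normr2 :
  P.-integrable [set: Omega] (EFin \o (fun w => `|X w| ^+ 2)).
Proof.
apply/integrableP; split.
  apply/measurable_EFinP; apply: eq_measurable_fun (mD 0) => w _.
  exact: orbit_dist2_0.
rewrite (eq_integral (fun w => (`|X w| ^+ 2)%:E)) // => w _ /=.
by rewrite ger0_norm ?sqr_ge0.
Qed.

Lemma measurable_orbit_ip_sup :
  measurable_fun [set: Omega] (fun w => orbit_ip_sup (X w) t0).
Proof.
apply: eq_measurable_fun (_ : measurable_fun _ (fun w =>
  (orbit_dist2 act (X w) 0 + `|t0| ^+ 2 - orbit_dist2 act (X w) t0) / 2)).
  by move=> w _; rewrite orbit_ip_supE.
apply: measurable_funM => //; apply: measurable_funB => //.
exact: measurable_funD.
Qed.

Lemma integrable_orbit_ip_sup :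
  P.-integrable [set: Omega] (EFin \o (fun w => orbit_ip_sup (X w) t0)).
Proof.
apply: (le_integrable _ _ _ (integrableD measurableT integrable_normr2
  (finite_measure_integrable_cst P (`|t0| ^+ 2) measurableT))) => //.
  exact/measurable_EFinP/measurable_orbit_ip_sup.
move=> w _ /=; rewrite lee_fin (le_trans (normr_orbit_ip_sup_le _ _)) //.
rewrite (le_trans _ (ler_norm _)) //.
have := sqr_ge0 (`|X w| - `|t0|); rewrite sqrrB; nra.
Qed.

Lemma frechet_fun_scale l : 0 <= l ->
  frechet_fun act P X (l *: t0) = (\int[P]_w `|X w| ^+ 2
    + l ^+ 2 * `|t0| ^+ 2 - 2 * l * \int[P]_w orbit_ip_sup (X w) t0)%:E.
Proof.
move=> l0; rewrite /frechet_fun (eq_integral (fun w =>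
  (`|X w| ^+ 2 + l ^+ 2 * `|t0| ^+ 2 - 2 * l * orbit_ip_sup (X w) t0)%:E));
    last first.
  by move=> w _; rewrite orbit_dist2_scale.
exact: integral_affine_EFin integrable_normr2 integrable_orbit_ip_sup.
Qed.

Lemma measurable_lt_orbit_ip_sup :
  measurable [set w | ip (X w) t0 < orbit_ip_sup (X w) t0].
Proof.
have := measurable_fun_ltr (mX t0) measurable_orbit_ip_sup measurableT
  (_ : measurable [set true]).
by rewrite setTI; apply.
Qed.

Lemma lt_integral_orbit_ip_sup : is_expectation ip P X t0 ->
  (0 < P [set w | (ip (X w) t0 < orbit_ip_sup (X w) t0)%R])%E ->
  `|t0| ^+ 2 < \int[P]_w orbit_ip_sup (X w) t0.
Proof.
move=> /(_ t0) [intI EI] Pgap.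
have : (0 < \int[P]_w (orbit_ip_sup (X w) t0)%:E - \int[P]_w (ip (X w) t0)%:E)%E.
  rewrite -integralB_EFin //; last exact: integrable_orbit_ip_sup.
  apply: integral_gt0; first exact: measurable_funB measurable_orbit_ip_sup (mX t0).
    by move=> w; rewrite subr_ge0 ip_le_orbit_ip_sup.
  by under eq_set do rewrite subr_gt0.
rewrite EI -[X in (_ < X - _)%E]fineK ?integrable_fin_num //; last first.
  exact: integrable_orbit_ip_sup.
by rewrite -EFinB lte_fin subr_gt0 ipxx.
Qed.

End FrechetFunctionOnRay.

End OrbitInnerSup.

End InnerProduct.

Theorem mainTheorem10 (R : realType) (M : completeNormedModType R)
  (ip : M -> M -> R) (G : Type) (mul : G -> G -> G) (one : G) (inv : G -> G)
  (act : G -> M -> M)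
  (d : measure_display) (Omega : measurableType d) (P : probability Omega R)
  (X : Omega -> M) (t0 : M) (a : R) (phi : R -> M) (v : M) :
  is_inner_product ip ->
  is_group mul one inv ->
  is_lin_isom_action mul one act ->
  (forall y, measurable_fun [set: Omega] (fun w => ip (X w) y)) ->
  (forall m, measurable_fun [set: Omega] (fun w => orbit_dist2 act (X w) m)) ->
  (\int[P]_w (`|X w| ^+ 2)%:E < +oo)%E ->
  is_expectation ip P X t0 ->
  t0 != 0 ->
  0 < a ->
  (forall t, - a < t < a -> derivable phi t 1) ->
  {in `](- a), a[, continuous (derive1 phi)} ->
  (forall t, - a < t < a -> gorbit act t0 (phi t)) ->
  phi 0 = t0 ->
  derive1 phi 0 = v ->
  v != 0 ->
  (0 < P [set w | ip (X w) v != 0%R])%E ->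
  (0 < P [set w | (ip (X w) t0 < sup [set ip (act g (X w)) t0 | g in [set: G]])%R])%E
  /\ ~ is_frechet_mean act P X t0.
Proof.
move=> hip hG hact mX mD EX2 hE t0n0 a0 dphi _ orb phi0 dphi0 _ Pv.
rewrite derive1E in dphi0; rewrite -phi0 in orb.
have gap : [set w | ip (X w) v != 0] `<=`
           [set w | ip (X w) t0 < orbit_ip_sup ip act (X w) t0].
  move=> w /= Xv; rewrite -phi0.
  by apply: (ip_lt_orbit_ip_sup hip hG hact (X w) a0 dphi orb); rewrite dphi0.
have mA : measurable [set w | ip (X w) v != 0].
  rewrite -[X in measurable X]setTI
    (_ : [set w | _] = (fun w => ip (X w) v) @^-1` ~` [set 0]).
    by apply: mX => //; exact: measurableC.
  by apply/seteqP; split => w /= /eqP.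
have Pgap : (0 < P [set w | (ip (X w) t0 < orbit_ip_sup ip act (X w) t0)%R])%E.
  apply: lt_le_trans Pv (le_measure _ _ _ gap); rewrite inE //.
  by have := measurable_lt_orbit_ip_sup hip hact X t0 mD mX; apply.
split => // frechet.
have := lt_integral_orbit_ip_sup hip hact X t0 mD mX EX2 hE Pgap.
set S := \int[P]_w _; set T := `|t0| ^+ 2 => TS.
have T0 : 0 < T by rewrite exprn_gt0 // normr_gt0.
have := frechet ((S / T) *: t0).
rewrite -{1}(scale1r t0) !(frechet_fun_scale hip hact X t0 mD EX2) //; last first.
  by rewrite divr_ge0 // ltW // (lt_trans T0).
rewrite -/S -/T lee_fin -subr_ge0.
have -> : \int[P]_w `|X w| ^+ 2 + (S / T) ^+ 2 * T - 2 * (S / T) * S -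
  (\int[P]_w `|X w| ^+ 2 + 1 ^+ 2 * T - 2 * 1 * S) = - ((S - T) ^+ 2 / T).
  by field; rewrite gt_eqF.
by rewrite oppr_ge0 leNgt divr_gt0 // exprn_gt0 // subr_gt0.
Qed.
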